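(* Suppose $B\subseteq\mathcal{SC}\times\mathcal{SC}$ is reflexive. For every $\rho\in\mathcal{SC}$, either $\rho\xrightarrow{\checkmark}$ or $\rho\|\overline{\rho}\xrightarrow{\tau}_B$ (the composition $\rho\|\overline\rho$ has a $\tau$-move).
   Context: Fix base types $BT$ with preorder $\leq_{\mathsf b}$ and labels $\mathcal L$. Contract terms: $\sigma::=\mathbf 1\mid ?\mathtt t.\sigma\mid !\mathtt t.\sigma\mid !(\sigma).\sigma\mid ?(\sigma).\sigma\mid \sum_{i\in I}?l_i.\sigma_i\mid \bigoplus_{i\in I}!l_i.\sigma_i\mid \mu x.\sigma\mid x$ ($I$ finite nonempty, labels distinct). $\mathcal{SC}$ = closed guarded terms. LTS: $\mathbf 1\xrightarrow\checkmark$; $\lambda.\sigma\xrightarrow\lambda\sigma$ for prefixes (including $!l.\sigma$); $\bigoplus_{i\in I}!l_i.\sigma_i\xrightarrow\tau!l_i.\sigma_i$ for $|I|>1$; $\sum ?l_i.\sigma_i\xrightarrow{?l_i}\sigma_i$; $\mu x.\sigma\xrightarrow\tau\sigma[\mu x.\sigma/x]$. $\lambda_1\bowtie_B\lambda_2$ iff the pair is $(!l,?l)$, $(?l,!l)$, $(!\mathtt t_1,?\mathtt t_2)$ with $\mathtt t_1\leq_{\mathsf b}\mathtt t_2$, $(?\mathtt t_1,!\mathtt t_2)$ with $\mathtt t_2\leq_{\mathsf b}\mathtt t_1$, $(!(\sigma_1),?(\sigma_2))$ with $\sigma_1B\sigma_2$, $(?(\sigma_1),!(\sigma_2))$ with $\sigma_2B\sigma_1$.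 $\rho\|\sigma\xrightarrow\tau_B$ by a $\tau$ of either side, or by $\rho\xrightarrow{\lambda_1}$, $\sigma\xrightarrow{\lambda_2}$ with $\lambda_1\bowtie_B\lambda_2$. Standard dual (messages unchanged): $\overline{\mathbf 1}=\mathbf 1$, $\overline x=x$, $\overline{\mu x.\sigma}=\mu x.\overline\sigma$, $\overline{?\mathtt t.\sigma}=!\mathtt t.\overline\sigma$, $\overline{!\mathtt t.\sigma}=?\mathtt t.\overline\sigma$, $\overline{?(\sigma^m).\sigma}=!(\sigma^m).\overline\sigma$, $\overline{!(\sigma^m).\sigma}=?(\sigma^m).\overline\sigma$, $\overline{\sum_i ?l_i.\sigma_i}=\bigoplus_i !l_i.\overline{\sigma_i}$, $\overline{\bigoplus_i !l_i.\sigma_i}=\sum_i ?l_i.\overline{\sigma_i}$. *)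

From Stdlib Require Import List Arith.
Import ListNotations.
Set Implicit Arguments.

Section Contracts.
Variables (BT L : Type).

(* Sum ls   = \sum_{i in I} ?l_i.s_i   (ls = [(l_i, s_i)])
   Choice ls = \bigoplus_{i in I} !l_i.s_i ; the single-branch Choice [(l,s)]
   is the prefix !l.s. *)
Inductive term : Type :=
| One : term
| InT : BT -> term -> term
| OutT : BT -> term -> term
| OutM : term -> term -> term
| InM : term -> term -> term
| Sum : list (L * term) -> term
| Choice : list (L * term) -> term
| Mu : nat -> term -> term
| Var : nat -> term.

(* capture-avoidance is irrelevant: we only substitute closed terms *)
Fixpoint subst (u : term) (x : nat) (t : term) : term :=
  match t with
  | One => One
  | InT b s => InT b (subst u x s)
  | OutT b s => OutT b (subst u x s)
  | OutM m s => OutM (subst u x m) (subst u x s)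
  | InM m s => InM (subst u x m) (subst u x s)
  | Sum ls => Sum (map (fun p => (fst p, subst u x (snd p))) ls)
  | Choice ls => Choice (map (fun p => (fst p, subst u x (snd p))) ls)
  | Mu y s => if Nat.eqb x y then Mu y s else Mu y (subst u x s)
  | Var y => if Nat.eqb x y then u else Var y
  end.

Fixpoint occurs_free (x : nat) (t : term) : Prop :=
  match t with
  | One => False
  | InT _ s | OutT _ s => occurs_free x s
  | OutM m s | InM m s => occurs_free x m \/ occurs_free x s
  | Sum ls | Choice ls =>
      (fix g (l : list (L * term)) : Prop :=
         match l with [] => False | (_, s) :: r => occurs_free x s \/ g r end) ls
  | Mu y s => y <> x /\ occurs_free x s
  | Var y => y = x
  end.

Fixpoint unguarded (x : nat) (t : term) : Prop :=
  match t with
  | Var y => y = x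
  | Mu y s => y <> x /\ unguarded x s
  | _ => False
  end.

Fixpoint wf (t : term) : Prop :=
  match t with
  | One | Var _ => True
  | InT _ s | OutT _ s => wf s
  | OutM m s | InM m s => wf m /\ wf s
  | Sum ls | Choice ls =>
      ls <> [] /\ NoDup (map fst ls) /\
      (fix g (l : list (L * term)) : Prop :=
         match l with [] => True | (_, s) :: r => wf s /\ g r end) ls
  | Mu x s => ~ unguarded x s /\ wf s
  end.

Definition closed (t : term) : Prop := forall x, ~ occurs_free x t.

Definition SC (t : term) : Prop := closed t /\ wf t.

Inductive act : Type :=
| aTick | aTau
| aInT : BT -> act | aOutT : BT -> act
| aInL : L -> act | aOutL : L -> act
| aInM : term -> act | aOutM : term -> act.

Inductive step : term -> act -> term -> Prop :=
| st_one : step One aTick One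
| st_inT : forall b s, step (InT b s) (aInT b) s
| st_outT : forall b s, step (OutT b s) (aOutT b) s
| st_outM : forall m s, step (OutM m s) (aOutM m) s
| st_inM : forall m s, step (InM m s) (aInM m) s
| st_outL : forall l s, step (Choice [(l, s)]) (aOutL l) s
| st_choice : forall ls l s, 1 < length ls -> In (l, s) ls ->
    step (Choice ls) aTau (Choice [(l, s)])
| st_sum : forall ls l s, In (l, s) ls -> step (Sum ls) (aInL l) s
| st_mu : forall x s, step (Mu x s) aTau (subst (Mu x s) x s).

Definition bowtie (leb : BT -> BT -> Prop) (B : term -> term -> Prop)
  (a1 a2 : act) : Prop :=
  match a1, a2 with
  | aOutL l1, aInL l2 => l1 = l2
  | aInL l1, aOutL l2 => l1 = l2
  | aOutT t1, aInT t2 => leb t1 t2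
  | aInT t1, aOutT t2 => leb t2 t1
  | aOutM s1, aInM s2 => B s1 s2
  | aInM s1, aOutM s2 => B s2 s1
  | _, _ => False
  end.

Definition comp_tau (leb : BT -> BT -> Prop) (B : term -> term -> Prop)
  (rho sigma : term) : Prop :=
  (exists rho', step rho aTau rho') \/
  (exists sigma', step sigma aTau sigma') \/
  (exists a1 a2 rho' sigma', step rho a1 rho' /\ step sigma a2 sigma' /\
                             bowtie leb B a1 a2).

Fixpoint dual (t : term) : term :=
  match t with
  | One => One
  | Var x => Var x
  | Mu x s => Mu x (dual s)
  | InT b s => OutT b (dual s)
  | OutT b s => InT b (dual s)
  | InM m s => OutM m (dual s)
  | OutM m s => InM m (dual s)
  | Sum ls => Choice (map (fun p => (fst p, dual (snd p))) ls)
  | Choice ls => Sum (map (fun p => (fst p, dual (snd p))) ls)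
  end.

End Contracts.

(* A recursion or a proper internal
   choice (on either side of rho || dual rho) makes an internal move; every
   remaining term except 1 starts with a single prefix (a singleton external
   sum included), and dual rho starts with the complementary prefix on the
   same message, so the two synchronise by reflexivity of [leb] or of [B]. *)
From Stdlib Require Import List Arith RelationClasses.
Import ListNotations.
Set Implicit Arguments.

Section DualCompliance.
Variables (BT L : Type).

Lemma SC_OutM_message (m s : term BT L) : SC (OutM m s) -> SC m.
Proof.
  intros [Hc [Hw _]]; split; [|exact Hw].
  intros x Hx; apply (Hc x); simpl; tauto.
Qed.

Lemma SC_InM_message (m s : term BT L) : SC (InM m s) -> SC m.
Proof.
  intros [Hc [Hw _]]; split; [|exact Hw].
  intros x Hx; apply (Hc x); simpl; tauto.
Qed.

Lemma SC_not_Var x : ~ SC (Var BT L x).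
Proof. intros [Hc _]; now apply (Hc x). Qed.

Variables (leb : BT -> BT -> Prop) (B : term BT L -> term BT L -> Prop).

Lemma comp_tau_sync (rho sigma rho' sigma' : term BT L) (a1 a2 : act BT L) :
  step rho a1 rho' -> step sigma a2 sigma' -> bowtie leb B a1 a2 ->
  comp_tau leb B rho sigma.
Proof. intros H1 H2 Hb; right; right; now exists a1, a2, rho', sigma'. Qed.

Lemma comp_tau_Sum_dual (ls : list (L * term BT L)) :
  ls <> [] -> comp_tau leb B (Sum ls) (dual (Sum ls)).
Proof.
  intros Hne; destruct ls as [|[l s] [|p r]]; [congruence| |].
  - apply comp_tau_sync with s (dual s) (@aInL BT L l) (@aOutL BT L l);
      [apply st_sum; left; reflexivity | apply st_outL | reflexivity].
  - right; left; exists (Choice [(l, dual s)]).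
    apply st_choice; [simpl; auto with arith | left; reflexivity].
Qed.

Lemma comp_tau_Choice_dual (ls : list (L * term BT L)) :
  ls <> [] -> comp_tau leb B (Choice ls) (dual (Choice ls)).
Proof.
  intros Hne; destruct ls as [|[l s] [|p r]]; [congruence| |].
  - apply comp_tau_sync with s (dual s) (@aOutL BT L l) (@aInL BT L l);
      [apply st_outL | apply st_sum; left; reflexivity | reflexivity].
  - left; exists (Choice [(l, s)]).
    apply st_choice; [simpl; auto with arith | left; reflexivity].
Qed.

End DualCompliance.

Theorem mainTheorem17 (BT L : Type) (leb : BT -> BT -> Prop)
  (leb_refl : forall t, leb t t)
  (leb_trans : forall t1 t2 t3, leb t1 t2 -> leb t2 t3 -> leb t1 t3)
  (B : term BT L -> term BT L -> Prop)
  (B_sub : forall s1 s2, B s1 s2 -> SC s1 /\ SC s2)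
  (B_refl : forall s, SC s -> B s s)
  (rho : term BT L) (Hrho : SC rho) :
  (exists rho', step rho (aTick BT L) rho') \/ comp_tau leb B rho (dual rho).
Proof.
  destruct rho as [|b s|b s|m s|m s|ls|ls|x s|x].
  - left; exists (One BT L); constructor.
  - right; eapply comp_tau_sync; [constructor | constructor | apply leb_refl].
  - right; eapply comp_tau_sync; [constructor | constructor | apply leb_refl].
  - right; eapply comp_tau_sync; [constructor | constructor |].
    exact (B_refl _ (SC_OutM_message Hrho)).
  - right; eapply comp_tau_sync; [constructor | constructor |].
    exact (B_refl _ (SC_InM_message Hrho)).
  - right; apply comp_tau_Sum_dual, (proj1 (proj2 Hrho)).
  - right; apply comp_tau_Choice_dual, (proj1 (proj2 Hrho)).
  - right; left; eexists; constructor.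
  - exfalso; exact (SC_not_Var Hrho).
Qed.
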